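(* Let $G$ be a factor-critical graph with at least $7$ vertices. If $G$ is an edge-stable equimatchable graph which is not a complete graph on an odd number of vertices, then there is an independent set $S$ with $|S|\ge 2$ such that every vertex of $S$ is adjacent to every vertex of $V(G)\setminus S$.
   Context: All graphs are finite and simple. A graph is equimatchable if all its maximal matchings have the same cardinality; an equimatchable graph $G$ is edge-stable if $G\setminus e$ (delete edge $e$, keep vertices) is equimatchable for every $e\in E(G)$. A graph $G$ is factor-critical if $G-v$ has a perfect matching for every $v\in V(G)$. *)

(* A finite simple graph is a symmetric irreflexive
   relation e on a finType T (vertex set = T). Edges are 2-element sets
   {x,y} with e x y; matchings are sets of pairwise disjoint edges. *)
From mathcomp Require Import all_boot.
Set Implicit Arguments. Unset Strict Implicit. Unset Printing Implicit Defensive.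

Section Graphs.
Variable T : finType.

Definition is_edge (e : rel T) (f : {set T}) : bool :=
  [exists x, exists y, e x y && (f == [set x; y])].

Definition matching (e : rel T) (M : {set {set T}}) : bool :=
  [forall f in M, is_edge e f] &&
  [forall f in M, forall g in M, (f != g) ==> [disjoint f & g]].

Definition maximal_matching (e : rel T) (M : {set {set T}}) : Prop :=
  matching e M /\
  (forall f, is_edge e f -> f \notin M -> ~~ matching e (f |: M)).

Definition equimatchable (e : rel T) : Prop :=
  forall M N, maximal_matching e M -> maximal_matching e N -> #|M| = #|N|.

Definition del_edge (e : rel T) (f : {set T}) : rel T :=
  fun x y => e x y && ([set x; y] != f).

Definition edge_stable (e : rel T) : Prop :=
  equimatchable e /\ (forall f, is_edge e f -> equimatchable (del_edge e f)).

Definition covered (M : {set {set T}}) (x : T) : bool :=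
  [exists f in M, x \in f].

(* G - v has a perfect matching for every v: a matching of G avoiding v
   and covering every other vertex *)
Definition factor_critical (e : rel T) : Prop :=
  forall v, exists M, matching e M /\ ~~ covered M v /\
    (forall x, x != v -> covered M x).

Definition complete (e : rel T) : Prop := forall x y, x != y -> e x y.

Definition independent (e : rel T) (S : {set T}) : bool :=
  [forall x in S, forall y in S, ~~ e x y].

End Graphs.

From mathcomp Require Import all_boot zify.
Set Implicit Arguments. Unset Strict Implicit. Unset Printing Implicit Defensive.

(* A matching exposing exactly three vertices a, b, c must span at least two
   edges among them: otherwise it is maximal in G, or in G minus the edge ab,
   while being smaller than a near-perfect matching.  Applied locally (keep a
   near-perfect matching outside a small vertex set W and rematch W by hand),
   this rules out many small configurations.  In particular the neighbourhoods
   of two non-adjacent vertices are nested (seven vertices are needed to rule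
   out a chordless pentagon), so every non-neighbour of a vertex r of minimum
   degree dominates N(r).  Either the non-neighbours of r are independent, and
   then they form the required set, or they span an edge uv; then N(r) is
   independent, each vertex of N(r) being matched to a non-neighbour of r. *)

Section Matchings.
Variables (T : finType) (e : rel T).
Implicit Types (M L : {set {set T}}) (f g : {set T}) (A : {set T}).

Lemma is_edgeP f : reflect (exists x y, e x y /\ f = [set x; y]) (is_edge e f).
Proof.
apply: (iffP existsP) => [[x /existsP [y /andP [exy /eqP ->]]]|[x [y [exy ->]]]].
  by exists x, y.
by exists x; apply/existsP; exists y; rewrite exy eqxx.
Qed.

Lemma coveredP M x : reflect (exists2 f, f \in M & x \in f) (covered M x).
Proof. exact: (iffP exists_inP). Qed.

Lemma coveredE M x : covered M x = (x \in cover M).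
Proof. by apply/coveredP/bigcupP => -[f fM xf]; exists f. Qed.

Lemma covered0 x : covered (set0 : {set {set T}}) x = false.
Proof. by apply/coveredP => -[f]; rewrite inE. Qed.

Lemma covered_setU1 M f x : covered (f |: M) x = (x \in f) || covered M x.
Proof.
apply/coveredP/orP => [[g]|[xf|/coveredP [g gM xg]]].
- by rewrite !inE => /orP [/eqP ->|gM xg]; [left|right; apply/coveredP; exists g].
- by exists f; rewrite ?inE ?eqxx.
- by exists g; rewrite // !inE gM orbT.
Qed.

Lemma matchingP M :
  reflect ({in M, forall f, is_edge e f} /\
           {in M &, forall f g, f != g -> [disjoint f & g]})
          (matching e M).
Proof.
apply: (iffP andP) => -[hE hD]; split.
- exact/forall_inP.
- move=> f g fM gM; move/forall_inP: hD => /(_ f fM).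
  by move/forall_inP => /(_ g gM) /implyP.
- exact/forall_inP.
- apply/forall_inP => f fM; apply/forall_inP => g gM; apply/implyP.
  exact: hD.
Qed.

Lemma matching_edge M f : matching e M -> f \in M -> is_edge e f.
Proof. by case/matchingP=> hE _; apply: hE. Qed.

Lemma matching_disjoint M f g :
  matching e M -> f \in M -> g \in M -> f != g -> [disjoint f & g].
Proof. by case/matchingP=> _ hD; apply: hD. Qed.

Lemma matching_mem_eq M f g x :
  matching e M -> f \in M -> g \in M -> x \in f -> x \in g -> f = g.
Proof.
move=> hM fM gM xf xg; apply/eqP; apply: contraLR isT => fg.
by rewrite (disjointFr (matching_disjoint hM fM gM fg) xf) in xg.
Qed.

Lemma matching_mem_covered M x y :
  [set x; y] \in M -> covered M x /\ covered M y.
Proof.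
by move=> xyM; split; apply/coveredP; exists [set x; y]; rewrite // !inE eqxx ?orbT.
Qed.

Lemma matching_pairs_neq M x y a b :
  matching e M -> [set x; y] \in M -> [set a; b] \in M ->
  [set x; y] != [set a; b] -> [/\ x != a, x != b, y != a & y != b].
Proof.
move=> hM xyM abM ne; have dj := matching_disjoint hM xyM abM ne.
have := disjointFr dj (setU11 x [set y]); rewrite !inE => /norP [-> ->].
have yxy : y \in [set x; y] by rewrite !inE eqxx orbT.
by have := disjointFr dj yxy; rewrite !inE => /norP [-> ->].
Qed.

Lemma matching0 : matching e set0.
Proof. by apply/matchingP; split=> f; rewrite inE. Qed.

Lemma matching_subset M L : L \subset M -> matching e M -> matching e L.
Proof.
move=> /subsetP LM /matchingP [hE hD]; apply/matchingP; split.
  by move=> f /LM; apply: hE.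
by move=> f g /LM fM /LM gM; apply: hD.
Qed.

Lemma matching_setU1 M x y :
  matching e M -> e x y -> ~~ covered M x -> ~~ covered M y ->
  matching e ([set x; y] |: M).
Proof.
move=> /matchingP [hE hD] exy cx cy.
have dj g : g \in M -> [disjoint [set x; y] & g].
  move=> gM; rewrite disjoints_subset; apply/subsetP => z.
  rewrite !inE => /orP [] /eqP -> ; apply/negP => zg.
    by move/coveredP: cx; apply; exists g.
  by move/coveredP: cy; apply; exists g.
apply/matchingP; split.
  move=> f; rewrite !inE => /orP [/eqP ->|/hE //].
  by apply/is_edgeP; exists x, y.
move=> f g; rewrite !inE => /orP [/eqP ->|fM] /orP [/eqP ->|gM]; rewrite ?eqxx //.
- by move=> _; apply: dj.
- by move=> _; rewrite disjoint_sym; apply: dj.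
- exact: hD.
Qed.

Lemma maximal_matching_exposed M :
  matching e M ->
  (forall p q, e p q -> ~~ covered M p -> ~~ covered M q -> False) ->
  maximal_matching e M.
Proof.
move=> hM noedge; split => // _ /is_edgeP [p [q [epq ->]]] pqM.
apply/negP => hM'.
have exposed x : x \in [set p; q] -> ~~ covered M x.
  move=> xpq; apply/coveredP => -[g gM xg].
  have := matching_mem_eq hM' (setU11 _ M) (setU1r _ gM) xpq xg.
  by move=> pqg; move: pqM; rewrite pqg gM.
by apply: (noedge p q epq); apply: exposed; rewrite !inE eqxx ?orbT.
Qed.

Lemma card_matching_exposed M A :
  irreflexive e -> matching e M ->
  (forall z, covered M z = (z \notin A)) -> #|M| * 2 + #|A| = #|T|.
Proof.
move=> irr hM hA.
have -> : #|M| * 2 = #|~: A|.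
  have -> : ~: A = cover M.
    by apply/setP => z; rewrite -coveredE hA inE.
  apply/esym/card_uniform_partition.
    move=> f /(matching_edge hM) /is_edgeP [x [y [exy ->]]]; rewrite cards2.
    by case: eqP exy => // ->; rewrite irr.
  rewrite /partition eqxx /=; apply/andP; split.
    by apply/trivIsetP => f g fM gM; apply: matching_disjoint hM fM gM.
  apply/negP => /(matching_edge hM) /is_edgeP [x [y [_ /setP /(_ x)]]].
  by rewrite !inE eqxx.
by rewrite addnC cardsC.
Qed.

Lemma near_perfect_maximal M v :
  irreflexive e -> matching e M -> (forall z, covered M z = (z != v)) ->
  maximal_matching e M.
Proof.
move=> irr hM hv; apply: maximal_matching_exposed => // p q epq.
rewrite !hv !negbK => /eqP pv /eqP qv.
by move: epq; rewrite pv qv irr.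
Qed.

End Matchings.

Lemma matching_del_edge (T : finType) (e : rel T) (M : {set {set T}}) (f : {set T}) x :
  matching e M -> x \in f -> ~~ covered M x -> matching (del_edge e f) M.
Proof.
move=> /matchingP [hE hD] xf cx; apply/matchingP; split => // g gM.
have /is_edgeP [a [b [eab gab]]] := hE g gM.
apply/is_edgeP; exists a, b; split => //; rewrite /del_edge eab /=.
apply: contraNneq cx => abf; apply/coveredP; exists g => //.
by rewrite gab abf.
Qed.

Lemma card_gt2_other (X : finType) (A : {set X}) a b :
  2 < #|A| -> exists2 c, c \in A & (c != a) && (c != b).
Proof.
move=> A3; have : 0 < #|A :\: [set a; b]|.
  have := subset_leq_card (subsetIr A [set a; b]).
  by rewrite cardsD cards2; case: (a != b); lia.
case/card_gt0P => c; rewrite !inE negb_or => /andP [/andP [ca cb] cA].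
by exists c; rewrite ?ca ?cb.
Qed.

Section EdgeStableGraphs.
Variables (T : finType) (e : rel T).
Hypotheses (e_sym : symmetric e) (e_irr : irreflexive e).
Hypotheses (e_fc : factor_critical e) (e_stable : edge_stable e).
Implicit Types (M L : {set {set T}}) (W : {set T}).

Lemma adj_neq x y : e x y -> x != y.
Proof. by apply: contraTneq => ->; rewrite e_irr. Qed.

Lemma adj_nonadj_neq x y z : e x y -> ~~ e x z -> y != z.
Proof. by move=> exy; apply: contraNneq => <-. Qed.

Lemma nonadj_adj_neq x y z : ~~ e x y -> e x z -> y != z.
Proof. by move=> nxy; apply: contraTneq => <-. Qed.

Lemma matching_partner M x :
  matching e M -> covered M x -> exists y, e x y /\ [set x; y] \in M.
Proof.
move=> hM /coveredP [f fM xf].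
have /is_edgeP [a [b [eab fab]]] := matching_edge hM fM.
move: xf; rewrite fab !inE => /orP [] /eqP ->; first by exists b; rewrite -fab.
by exists a; rewrite e_sym setUC -fab.
Qed.

Lemma matching_adj M x y : matching e M -> [set x; y] \in M -> e x y.
Proof.
move=> hM xyM; have /is_edgeP [a [b [eab /setP xyab]]] := matching_edge hM xyM.
have := xyab a; have := xyab b; rewrite !inE !eqxx orbT /=.
case/orP=> /eqP bE /orP [] /eqP aE; move: eab; rewrite aE bE ?e_irr //.
by rewrite e_sym.
Qed.

Lemma matching_pair_neq M x y : matching e M -> [set x; y] \in M -> y != x.
Proof. by move=> hM /(matching_adj hM) /adj_neq; rewrite eq_sym. Qed.

Lemma matching_partners_neq M x y a b :
  matching e M -> [set x; y] \in M -> [set a; b] \in M ->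
  x != a -> x != b -> [/\ y != a, y != b & y != x].
Proof.
move=> hM xyM abM xa xb.
have ne : [set x; y] != [set a; b].
  by apply: contraNneq xa => /setP /(_ x); rewrite !inE eqxx (negbTE xb) orbF.
have [_ _ ya yb] := matching_pairs_neq hM xyM abM ne.
by split => //; apply: matching_pair_neq hM xyM.
Qed.

Lemma near_perfect_exists v :
  exists M, matching e M /\ forall z, covered M z = (z != v).
Proof.
have [M [hM [cv cz]]] := e_fc v; exists M; split => // z.
by case: (eqVneq z v) => [->|/cz]; [apply/negbTE|].
Qed.

Lemma card_near_perfect M v :
  matching e M -> (forall z, covered M z = (z != v)) -> #|M| * 2 + 1 = #|T|.
Proof.
move=> hM hv; have := card_matching_exposed (A := [set v]) e_irr hM.
by rewrite cards1; apply=> z; rewrite hv inE.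
Qed.

Lemma factor_critical_odd : 0 < #|T| -> odd #|T|.
Proof.
case/card_gt0P=> v _; have [M [hM hv]] := near_perfect_exists v.
by rewrite -(card_near_perfect hM hv) addn1 /= oddM andbF.
Qed.

Lemma near_perfect_card_gt2 M v :
  7 <= #|T| -> matching e M -> (forall z, covered M z = (z != v)) -> 2 < #|M|.
Proof. by move=> n7 hM hv; have := card_near_perfect hM hv; lia. Qed.

Lemma near_perfect_pair_neq M v x y :
  (forall z, covered M z = (z != v)) -> [set x; y] \in M -> x != v /\ y != v.
Proof. by move=> hv /matching_mem_covered; rewrite !hv. Qed.

Lemma near_perfect_partner M v x :
  matching e M -> (forall z, covered M z = (z != v)) -> x != v ->
  exists2 y, [set x; y] \in M & [set y; x] \in M.
Proof.
move=> hM hv xv; have [y [_ xyM]] := matching_partner hM (etrans (hv x) xv).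
by exists y; rewrite // setUC.
Qed.

Lemma exposed_triple_sparse M a b c :
  matching e M -> (forall z, covered M z = (z \notin [set a; b; c])) ->
  a != b -> a != c -> b != c -> ~~ e a c -> ~~ e b c -> False.
Proof.
move=> hM hc ab ac bc /negbTE nac /negbTE nbc.
have [N [hN hcN]] := near_perfect_exists a.
have card3 : #|[set a; b; c]| = 3.
  by rewrite -setUA cardsU1 cards2 bc !inE negb_or ab ac.
have neqMN : #|M| <> #|N|.
  have := card_matching_exposed e_irr hM hc; have := card_near_perfect hN hcN.
  by rewrite card3; lia.
have exposed_abc z : ~~ covered M z -> [\/ z = a, z = b | z = c].
  by rewrite hc negbK !inE => /orP [/orP [] /eqP|/eqP] ->; constructor.
have nca : e c a = false by rewrite e_sym.
have ncb : e c b = false by rewrite e_sym.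
have eba : e b a = e a b by rewrite e_sym.
have [eab|nab] := boolP (e a b).
- have ab_edge : is_edge e [set a; b] by apply/is_edgeP; exists a, b.
  have a_ab : a \in [set a; b] by rewrite !inE eqxx.
  have irr' : irreflexive (del_edge e [set a; b]) by move=> x; rewrite /del_edge e_irr.
  apply: neqMN; apply: (e_stable.2 _ ab_edge).
  + apply: maximal_matching_exposed.
      by apply: (matching_del_edge hM a_ab); rewrite hc !inE eqxx.
    move=> p q /andP [epq pq] /exposed_abc hp /exposed_abc hq.
    move: epq pq; case: hp => ->; case: hq => ->;
      rewrite ?e_irr ?nac ?nbc ?nca ?ncb ?eqxx //.
    by move=> _ /negP; apply; rewrite setUC.
  + apply: (near_perfect_maximal irr' _ hcN).
    by apply: (matching_del_edge hN a_ab); rewrite hcN eqxx.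
- have nba : e b a = false by rewrite eba; apply/negbTE.
  apply: neqMN; apply: e_stable.1; last exact: near_perfect_maximal hN hcN.
  apply: maximal_matching_exposed => // p q epq /exposed_abc hp /exposed_abc hq.
  by move: epq; case: hp => ->; case: hq => ->;
    rewrite ?e_irr ?nac ?nbc ?nca ?ncb ?nba ?(negbTE nab).
Qed.

Lemma exposed_triple_two_edges M a b c :
  matching e M -> (forall z, covered M z = (z \notin [set a; b; c])) ->
  a != b -> a != c -> b != c -> 2 <= e a b + e a c + e b c.
Proof.
move=> hM hc ab ac bc.
have sparse := exposed_triple_sparse hM.
have set3_perm (x y z : T) :
    [set x; y; z] = [set y; z; x] /\ [set x; y; z] = [set x; z; y].
  by split; apply/setP => w; rewrite !inE; do 3!case: (_ == _).
case: (set3_perm a b c) => rot swap.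
case eab: (e a b); case eac: (e a c); case ebc: (e b c) => //=; exfalso.
- by apply: (sparse a b c); rewrite ?eac ?ebc.
- apply: (sparse a c b); rewrite -?swap // 1?eq_sym //.
  + by rewrite eab.
  + by rewrite e_sym ebc.
- apply: (sparse b c a); rewrite -?rot // 1?eq_sym //.
  + by rewrite e_sym eab.
  + by rewrite e_sym eac.
- by apply: (sparse a b c); rewrite ?eac ?ebc.
Qed.

Definition closed_under M W :=
  forall g, g \in M -> forall w, w \in g -> w \in W -> g \subset W.

Lemma closed_under_partners M v W :
  matching e M -> (forall z, covered M z = (z != v)) ->
  (forall w, w \in W -> w != v -> exists2 x, [set w; x] \in M & x \in W) ->
  closed_under M W.
Proof.
move=> hM hv partnerW g gM w wg wW.
have wv : w != v by rewrite -hv; apply/coveredP; exists g.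
have [x wxM xW] := partnerW w wW wv.
rewrite (matching_mem_eq hM gM wxM wg (setU11 _ _)).
by apply/subsetP => z; rewrite !inE => /orP [] /eqP ->.
Qed.

(* Keep the edges of M outside W and use L inside W: this exposes exactly a, b, c. *)
Lemma window_two_edges M v W L a b c :
  matching e M -> (forall z, covered M z = (z != v)) ->
  v \in W -> closed_under M W ->
  matching e L -> {in L, forall f : {set T}, f \subset W} ->
  (forall z, (z \in W) && ~~ covered L z = (z \in [set a; b; c])) ->
  a != b -> a != c -> b != c -> 2 <= e a b + e a c + e b c.
Proof.
move=> hM hv vW closedW hL LW hLW.
set R := [set g in M | [disjoint g & W]].
have hR : matching e R by apply: matching_subset hM; apply/subsetP => g /setIdP [].
apply: (exposed_triple_two_edges (M := R :|: L)).
  apply/matchingP; split.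
    by move=> f /setUP [/(matching_edge hR)|/(matching_edge hL)].
  move=> f g /setUP [fR|fL] /setUP [gR|gL].
  - exact: matching_disjoint hR fR gR.
  - move=> _; move: fR => /setIdP [_ dj].
    exact: disjointWr (LW g gL) dj.
  - move=> _; move: gR => /setIdP [_ dj]; rewrite disjoint_sym.
    exact: disjointWr (LW f fL) dj.
  - exact: matching_disjoint hL fL gL.
move=> z; rewrite -hLW; case zW: (z \in W) => /=.
  rewrite negbK; apply/coveredP/coveredP.
    case=> f /setUP [/setIdP [_ dj] zf|fL zf]; last by exists f.
    by rewrite (disjointFr dj zf) in zW.
  by case=> f fL zf; exists f; rewrite // inE fL orbT.
have /coveredP [g gM zg] : covered M z.
  by rewrite hv; apply: contraFneq zW => ->.
apply/coveredP; exists g => //; apply/setUP; left; rewrite inE gM /=.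
rewrite disjoints_subset; apply/subsetP => w wg; rewrite inE.
by apply: contraFN zW => wW; apply: (subsetP (closedW g gM w wg wW)).
Qed.

Lemma window_sparse M v W L a b c :
  matching e M -> (forall z, covered M z = (z != v)) ->
  v \in W -> closed_under M W ->
  matching e L -> {in L, forall f : {set T}, f \subset W} ->
  (forall z, (z \in W) && ~~ covered L z = (z \in [set a; b; c])) ->
  a != b -> a != c -> b != c -> e a b + e a c + e b c <= 1 -> False.
Proof.
move=> hM hv vW closedW hL LW hLW ab ac bc.
by apply/negP; rewrite -ltnNge; apply: (window_two_edges hM hv vW closedW hL LW hLW).
Qed.

Ltac rewrite_neqs :=
  repeat match goal with
  | H : is_true (?a != ?b) |- context [?a == ?b] => rewrite (negbTE H)
  | H : is_true (?a != ?b) |- context [?b == ?a] => rewrite (eq_sym b a) (negbTE H)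
  end.

Ltac rewrite_adj :=
  repeat match goal with
  | H : e ?a ?b = _ |- context [e ?a ?b] => rewrite H
  | H : e ?a ?b = _ |- context [e ?b ?a] => rewrite (e_sym b a) H
  | H : is_true (e ?a ?b) |- context [e ?a ?b] => rewrite H
  | H : is_true (e ?a ?b) |- context [e ?b ?a] => rewrite (e_sym b a) H
  | H : is_true (~~ e ?a ?b) |- context [e ?a ?b] => rewrite (negbTE H)
  | H : is_true (~~ e ?a ?b) |- context [e ?b ?a] => rewrite (e_sym b a) (negbTE H)
  end.

Ltac case_vertex z :=
  repeat match goal with |- context [z == ?x] =>
    let E := fresh "E" in
    case: (eqVneq z x) => [E|?]; [try rewrite E|]; rewrite ?eqxx /=; rewrite_neqs;
    try done
  end.

Ltac solve_closed hM :=
  apply: (closed_under_partners hM) => //= z; rewrite !inE;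
  repeat case/orP=> [|/eqP ->]; try move=> /eqP ->; try (by rewrite eqxx);
  move=> _; match goal with H : is_true ([set ?w; ?x] \in _) |- _ =>
    exists x; [exact: H | by rewrite !inE eqxx ?orbT] end.

Ltac solve_matching :=
  repeat (apply: matching_setU1;
    [ | by rewrite_adj
      | by rewrite ?covered_setU1 ?covered0 ?inE /=; rewrite_neqs
      | by rewrite ?covered_setU1 ?covered0 ?inE /=; rewrite_neqs ]);
  exact: matching0.

Ltac solve_inside :=
  move=> f; rewrite !inE ?orbF; repeat case/orP=> [/eqP ->|]; try move=> /eqP ->;
  try done; apply/subsetP => z; rewrite !inE => /orP [] /eqP ->;
  by rewrite !eqxx ?orbT.

Ltac solve_exposed :=
  let z := fresh "z" in
  move=> z; rewrite ?covered_setU1 ?covered0 !inE /= ?andbT ?orbF; case_vertex z.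

Ltac window_contra hM hv W L a b c :=
  apply: (window_sparse (W := W) (L := L) (a := a) (b := b) (c := c) hM hv);
  first [ done | by rewrite !inE eqxx | solve [solve_closed hM]
        | solve [solve_matching] | solve [solve_inside] | solve [solve_exposed]
        | by rewrite eq_sym | by rewrite_adj
        | by rewrite_adj; case: (e _ _) ].

Lemma near_perfect_adj_partner M a w w' :
  matching e M -> (forall z, covered M z = (z != a)) -> [set w; w'] \in M ->
  ~~ e a w -> e a w'.
Proof.
move=> hM hv ww'M naw; apply/negPn/negP => naw'.
have [wa w'a] := near_perfect_pair_neq hv ww'M.
have w'wM : [set w'; w] \in M by rewrite setUC.
have ww' := matching_pair_neq hM w'wM.
window_contra hM hv [set a; w; w'] (set0 : {set {set T}}) a w w'.
Qed.

(* v u' u p q is a pentagon containing two edges of M; [pentagon_nonadj] shows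
   that it is chordless. *)
Section Pentagon.
Hypothesis n7 : 7 <= #|T|.
Variables (M : {set {set T}}) (v u u' p q : T).
Hypotheses (hM : matching e M) (hv : forall z, covered M z = (z != v)).
Hypotheses (uu'M : [set u; u'] \in M) (pqM : [set p; q] \in M).
Hypotheses (evu' : e v u') (evq : e v q) (eup : e u p).
Hypotheses (nvu : ~~ e v u) (nvp : ~~ e v p) (nuq : ~~ e u q) (nu'q : ~~ e u' q).

Let u'uM : [set u'; u] \in M. Proof. by rewrite setUC. Qed.
Let qpM : [set q; p] \in M. Proof. by rewrite setUC. Qed.
Let euu' : e u u'. Proof. exact: matching_adj hM uu'M. Qed.
Let epq : e p q. Proof. exact: matching_adj hM pqM. Qed.
Let uv : u != v. Proof. exact: (near_perfect_pair_neq hv uu'M).1. Qed.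
Let u'v : u' != v. Proof. exact: (near_perfect_pair_neq hv uu'M).2. Qed.
Let pv : p != v. Proof. exact: (near_perfect_pair_neq hv pqM).1. Qed.
Let qv : q != v. Proof. exact: (near_perfect_pair_neq hv pqM).2. Qed.
Let up : u != p. Proof. exact: adj_neq eup. Qed.
Let u'u : u' != u. Proof. exact: matching_pair_neq hM uu'M. Qed.
Let qp : q != p. Proof. exact: matching_pair_neq hM pqM. Qed.
Let u'p : u' != p. Proof. exact: adj_nonadj_neq evu' nvp. Qed.
Let uq : u != q. Proof. exact: nonadj_adj_neq nvu evq. Qed.
Let u'q : u' != q. Proof. exact: adj_nonadj_neq euu' nuq. Qed.

Lemma pentagon_nonadj : ~~ e u' p.
Proof.
apply/negP => eu'p.
window_contra hM hv [set v; u; u'; p; q] ([set u'; p] |: set0) v u q.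
Qed.

Lemma pentagon_no_third_edge x y :
  [set x; y] \in M -> [set x; y] != [set u; u'] -> [set x; y] != [set p; q] ->
  False.
Proof.
move=> xyM xyu xyp; have nu'p := pentagon_nonadj.
have yxM : [set y; x] \in M by rewrite setUC.
have exy := matching_adj hM xyM.
have xy := adj_neq exy.
have [xu xu' yu yu'] := matching_pairs_neq hM xyM uu'M xyu.
have [xp xq yp yq] := matching_pairs_neq hM xyM pqM xyp.
have [xv yv] := near_perfect_pair_neq hv xyM.
case evx: (e v x).
  case eu'x: (e u' x).
    case euy: (e u y).
      { window_contra hM hv [set v; u'; u; p; q; x; y]
          ([set v; x] |: ([set u; y] |: set0)) u' p q. }
      { window_contra hM hv [set v; u'; u; p; q; x; y]
          ([set u'; x] |: ([set p; q] |: set0)) v u y. }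
  case epx: (e p x).
    case eu'y: (e u' y).
      { window_contra hM hv [set v; u'; u; p; q; x; y]
          ([set u'; y] |: ([set p; x] |: set0)) v u q. }
      { window_contra hM hv [set v; u'; u; p; q; x; y]
          ([set v; q] |: ([set u; p] |: set0)) u' x y. }
    case epy: (e p y).
      { window_contra hM hv [set v; u'; u; p; q; x; y]
          ([set v; x] |: ([set p; y] |: set0)) u' u q. }
      { window_contra hM hv [set v; u'; u; p; q; x; y]
          ([set v; q] |: ([set u'; u] |: set0)) p x y. }
case eu'x: (e u' x).
  case epx: (e p x).
    case evy: (e v y).
      { window_contra hM hv [set v; u'; u; p; q; x; y]
          ([set v; y] |: ([set p; x] |: set0)) u' u q. }
      { window_contra hM hv [set v; u'; u; p; q; x; y]
          ([set u'; u] |: ([set p; q] |: set0)) v x y. }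
    case epy: (e p y).
      { window_contra hM hv [set v; u'; u; p; q; x; y]
          ([set u'; x] |: ([set p; y] |: set0)) v u q. }
      { window_contra hM hv [set v; u'; u; p; q; x; y]
          ([set v; q] |: ([set u'; u] |: set0)) p x y. }
case evy: (e v y).
  case eux: (e u x).
    { window_contra hM hv [set v; u'; u; p; q; x; y]
        ([set v; y] |: ([set u; x] |: set0)) u' p q. }
    { window_contra hM hv [set v; u'; u; p; q; x; y]
        ([set v; y] |: ([set p; q] |: set0)) u' u x. }
  { window_contra hM hv [set v; u'; u; p; q; x; y]
      ([set u'; u] |: ([set p; q] |: set0)) v x y. }
Qed.

Lemma near_perfect_no_pentagon : False.
Proof.
have M3 := near_perfect_card_gt2 n7 hM hv.
have [f fM /andP [fu fp]] := card_gt2_other [set u; u'] [set p; q] M3.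
have /is_edgeP [x [y [_ fxy]]] := matching_edge hM fM.
by subst f; apply: (pentagon_no_third_edge fM).
Qed.

End Pentagon.

Lemma nonadj_nbhd_dominates u v p q :
  7 <= #|T| -> ~~ e u v -> e u p -> ~~ e v p -> e v q -> e u q.
Proof.
move=> n7 nuv eup nvp evq; apply/negPn/negP => nuq.
have [M [hM hv]] := near_perfect_exists v.
have nvu : ~~ e v u by rewrite e_sym.
have uv : u != v by apply: contraTneq eup => ->.
have pv := adj_nonadj_neq eup nuv.
have qv : q != v by rewrite eq_sym adj_neq.
have up := adj_neq eup.
have [u' uu'M u'uM] := near_perfect_partner hM hv uv.
have [p' pp'M p'pM] := near_perfect_partner hM hv pv.
have [q' qq'M q'qM] := near_perfect_partner hM hv qv.
have euu' := matching_adj hM uu'M.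
have evu' := near_perfect_adj_partner hM hv uu'M nvu.
have evp' := near_perfect_adj_partner hM hv pp'M nvp.
have [_ u'v] := near_perfect_pair_neq hv uu'M.
have [_ p'v] := near_perfect_pair_neq hv pp'M.
have [_ q'v] := near_perfect_pair_neq hv qq'M.
have u'p := adj_nonadj_neq evu' nvp.
have up' := nonadj_adj_neq nvu evp'.
have [_ u'p' u'u] := matching_partners_neq hM uu'M pp'M up up'.
have p'p := matching_pair_neq hM pp'M.
have nu'p' : ~~ e u' p'.
  apply/negP => eu'p'.
  window_contra hM hv [set v; u; u'; p; p'] ([set u'; p'] |: set0) v u p.
case: (eqVneq q p') => [qp'|qp'].
  by subst p'; apply: (near_perfect_no_pentagon n7 hM hv uu'M pp'M).
have qu := adj_nonadj_neq evq nvu.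
have qu' := nonadj_adj_neq nuq euu'.
have qp := adj_nonadj_neq evq nvp.
have [q'u q'u' q'q] := matching_partners_neq hM qq'M uu'M qu qu'.
have [q'p q'p' _] := matching_partners_neq hM qq'M pp'M qp qp'.
have nu'q' : ~~ e u' q'.
  apply/negP => eu'q'.
  window_contra hM hv [set v; u; u'; q; q'] ([set u'; q'] |: set0) v u q.
window_contra hM hv [set v; u; u'; p; p'; q; q']
  ([set v; q] |: ([set u; p] |: set0)) u' p' q'.
Qed.

Definition independent_joined (S : {set T}) :=
  independent e S /\ 2 <= #|S| /\ (forall x y, x \in S -> y \notin S -> e x y).

Section MinDegreeNbhd.
Variables (r u v u' v' : T) (N : {set {set T}}).
Hypotheses (hN : matching e N) (hr : forall z, covered N z = (z != r)).
Hypotheses (uu'N : [set u; u'] \in N) (vv'N : [set v; v'] \in N).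
Hypotheses (euv : e u v) (nru : ~~ e r u) (nrv : ~~ e r v).
Hypotheses (eru' : e r u') (erv' : e r v').
Hypothesis dom : forall z k, ~~ e r z -> e r k -> e z k.

Let u'uN : [set u'; u] \in N. Proof. by rewrite setUC. Qed.
Let v'vN : [set v'; v] \in N. Proof. by rewrite setUC. Qed.
Let ur : u != r. Proof. by apply: contraTneq euv => ->. Qed.
Let vr : v != r. Proof. by apply: contraTneq euv => ->; rewrite e_sym. Qed.
Let u'r : u' != r. Proof. exact: (near_perfect_pair_neq hr uu'N).2. Qed.
Let v'r : v' != r. Proof. exact: (near_perfect_pair_neq hr vv'N).2. Qed.
Let uv : u != v. Proof. exact: adj_neq. Qed.
Let u'v : u' != v. Proof. exact: adj_nonadj_neq eru' nrv. Qed.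
Let uv' : u != v'. Proof. exact: nonadj_adj_neq nru erv'. Qed.
Let u'v' : u' != v'. Proof. by case: (matching_partners_neq hN uu'N vv'N uv uv'). Qed.
Let u'u : u' != u. Proof. exact: matching_pair_neq hN uu'N. Qed.
Let v'v : v' != v. Proof. exact: matching_pair_neq hN vv'N. Qed.

Lemma nbhd_partners_nonadj : ~~ e u' v'.
Proof.
apply/negP => eu'v'.
window_contra hN hr [set r; u; u'; v; v'] ([set u'; v'] |: set0) r u v.
Qed.

Lemma nbhd_no_matched_pair x y : [set x; y] \in N -> e r x -> e r y -> False.
Proof.
move=> xyN erx ery.
have nu'v' := nbhd_partners_nonadj.
have yxN : [set y; x] \in N by rewrite setUC.
have exy := matching_adj hN xyN.
have xy := adj_neq exy.
have [xr yr] := near_perfect_pair_neq hr xyN.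
have [ux uy] := (nonadj_adj_neq nru erx, nonadj_adj_neq nru ery).
have [vx vy] := (nonadj_adj_neq nrv erx, nonadj_adj_neq nrv ery).
have [u'x u'y _] := matching_partners_neq hN uu'N xyN ux uy.
have [v'x v'y _] := matching_partners_neq hN vv'N xyN vx vy.
case eu'x: (e u' x); last first.
  window_contra hN hr [set r; u; u'; v; v'; x; y]
    ([set u; v] |: ([set r; y] |: set0)) u' v' x.
case ev'x: (e v' x); last first.
  window_contra hN hr [set r; u; u'; v; v'; x; y]
    ([set u; v] |: ([set r; y] |: set0)) u' v' x.
case eu'y: (e u' y); last first.
  window_contra hN hr [set r; u; u'; v; v'; x; y]
    ([set u; v] |: ([set r; x] |: set0)) u' v' y.
case ev'y: (e v' y); last first.
  window_contra hN hr [set r; u; u'; v; v'; x; y]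
    ([set u; v] |: ([set r; x] |: set0)) u' v' y.
window_contra hN hr [set r; u; u'; v; v'; x; y]
  ([set u'; x] |: ([set v'; y] |: set0)) r u v.
Qed.

Lemma nbhd_partner x : e r x ->
  exists x', [/\ [set x; x'] \in N, [set x'; x] \in N, ~~ e r x', x' != r
               & forall k, e r k -> e x' k].
Proof.
move=> erx; have xr : x != r by rewrite eq_sym adj_neq.
have [x' xx'N x'xN] := near_perfect_partner hN hr xr.
have nrx' : ~~ e r x' by apply/negP; apply: nbhd_no_matched_pair xx'N erx.
have [_ x'r] := near_perfect_pair_neq hr xx'N.
by exists x'; split => // k; apply: dom.
Qed.

Lemma nbhd_edge_at_partner x y :
  e r x -> e r y -> e x y -> x != u' -> x != v' -> False.
Proof.
move=> erx ery exy xu' xv'.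
have [x' [xx'N x'xN nrx' x'r domx']] := nbhd_partner erx.
have [xr yr] : x != r /\ y != r by rewrite !(eq_sym _ r) !adj_neq.
have [xu xv] := (adj_nonadj_neq erx nru, adj_nonadj_neq erx nrv).
have [yu yv] := (adj_nonadj_neq ery nru, adj_nonadj_neq ery nrv).
have xy := adj_neq exy.
have [x'u x'u' x'x] := matching_partners_neq hN xx'N uu'N xu xu'.
have [x'v x'v' _] := matching_partners_neq hN xx'N vv'N xv xv'.
have yx' := adj_nonadj_neq ery nrx'.
have [ex'u' ex'v'] := (domx' _ eru', domx' _ erv').
case: (eqVneq y u') => [yu'|yu'].
  subst y; window_contra hN hr [set r; u; u'; v; v'; x; x']
    ([set x; u'] |: ([set v'; x'] |: set0)) r u v.
case: (eqVneq y v') => [yv'|yv'].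
  subst y; window_contra hN hr [set r; u; u'; v; v'; x; x']
    ([set x; v'] |: ([set u'; x'] |: set0)) r u v.
have [y' [yy'N y'yN nry' y'r domy']] := nbhd_partner ery.
have [y'u y'u' y'y] := matching_partners_neq hN yy'N uu'N yu yu'.
have [y'v y'v' _] := matching_partners_neq hN yy'N vv'N yv yv'.
have xy' := adj_nonadj_neq erx nry'.
have [x'y x'y' _] := matching_partners_neq hN xx'N yy'N xy xy'.
have [ey'u' ey'v'] := (domy' _ eru', domy' _ erv').
window_contra hN hr [set r; u; u'; v; v'; x; x'; y; y']
  ([set x; y] |: ([set u'; x'] |: ([set v'; y'] |: set0))) r u v.
Qed.

Lemma nbhd_independent x y : e r x -> e r y -> ~~ e x y.
Proof.
move=> erx ery; apply/negP => exy.
have [/andP [xu' xv']|nx] := boolP ((x != u') && (x != v')).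
  exact: (nbhd_edge_at_partner erx ery exy).
have [/andP [yu' yv']|ny] := boolP ((y != u') && (y != v')).
  by apply: (nbhd_edge_at_partner ery erx _ yu' yv'); rewrite e_sym.
move: nx ny exy; rewrite !negb_and !negbK => /orP [] /eqP -> /orP [] /eqP ->;
  by rewrite ?e_irr ?(e_sym v') ?(negbTE nbhd_partners_nonadj).
Qed.

Lemma nbhd_independent_joined : independent_joined [set z | e r z].
Proof.
split; last split.
- apply/forall_inP => x; rewrite inE => erx.
  by apply/forall_inP => y; rewrite inE; apply: nbhd_independent.
- by apply/card_gt1P; exists u', v'; rewrite !inE eru' erv'.
- by move=> x y; rewrite !inE => erx nry; rewrite e_sym; apply: dom.
Qed.

End MinDegreeNbhd.

Section MinDegree.
Hypothesis n7 : 7 <= #|T|.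
Variable r : T.
Hypothesis r_min : forall z, #|[set w | e r w]| <= #|[set w | e z w]|.

Lemma min_degree_nonnbr_dominates u k : ~~ e r u -> e r k -> e u k.
Proof.
move=> nru erk; apply/negPn/negP => nuk.
have Nu_sub : [set w | e u w] \subset [set w | e r w].
  apply/subsetP => p; rewrite !inE => eup; apply: contraNT nuk => nrp.
  by apply: (nonadj_nbhd_dominates n7 _ eup nrp erk); rewrite e_sym.
have : [set w | e u w] \proper [set w | e r w].
  by rewrite properE Nu_sub; apply/subsetPn; exists k; rewrite !inE.
by move/proper_card; rewrite ltnNge r_min.
Qed.

Lemma min_degree_nonadj : ~ complete e -> exists2 s, s != r & ~~ e r s.
Proof.
move=> notK; case: (boolP [exists s, (s != r) && ~~ e r s]).
  by case/existsP => s /andP [sr nrs]; exists s.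
move/existsPn => r_univ; case: notK => x y xy.
have Nx : [set w | e x w] \subset [set~ x].
  by apply/subsetP => w; rewrite !inE => /adj_neq; rewrite eq_sym.
have Nr : [set~ r] \subset [set w | e r w].
  apply/subsetP => w; rewrite !inE => wr.
  by have := r_univ w; rewrite wr negbK.
have /eqP Nx_full : [set w | e x w] == [set~ x].
  rewrite eqEcard Nx /= cardsC1 -(cardsC1 r).
  exact: leq_trans (subset_leq_card Nr) (r_min x).
have : y \in [set~ x] by rewrite !inE eq_sym.
by rewrite -Nx_full inE.
Qed.

Lemma nonnbhd_independent_joined :
  ~ complete e -> independent e [set z | ~~ e r z] ->
  independent_joined [set z | ~~ e r z].
Proof.
move=> notK indC; have [s sr nrs] := min_degree_nonadj notK.
split=> //; split.
  by apply/card_gt1P; exists r, s; rewrite !inE e_irr nrs eq_sym sr.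
by move=> x y; rewrite !inE negbK => nrx ery; apply: min_degree_nonnbr_dominates.
Qed.

End MinDegree.

Lemma exists_independent_joined :
  7 <= #|T| -> ~ complete e -> exists S, independent_joined S.
Proof.
move=> n7 notK.
have /card_gt0P [x0 _] : 0 < #|T| by apply: leq_trans n7.
have [r _ r_min] := arg_minnP (fun z => #|[set w | e z w]|) (isT : xpredT x0).
have {}r_min z : #|[set w | e r w]| <= #|[set w | e z w]| by apply: r_min.
case: (boolP (independent e [set z | ~~ e r z])) => [indC|].
  by exists [set z | ~~ e r z]; exact: (nonnbhd_independent_joined n7 r_min notK indC).
case/forall_inPn => u; rewrite inE => nru /forall_inPn [v]; rewrite inE negbK => nrv euv.
have [N [hN hr]] := near_perfect_exists r.
have ur : u != r by apply: contraTneq euv => ->.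
have vr : v != r by apply: contraTneq euv => ->; rewrite e_sym.
have [u' uu'N _] := near_perfect_partner hN hr ur.
have [v' vv'N _] := near_perfect_partner hN hr vr.
have eru' := near_perfect_adj_partner hN hr uu'N nru.
have erv' := near_perfect_adj_partner hN hr vv'N nrv.
exists [set z | e r z].
exact: (nbhd_independent_joined hN hr uu'N vv'N euv nru nrv eru' erv'
         (min_degree_nonnbr_dominates n7 r_min)).
Qed.

End EdgeStableGraphs.

Theorem lemma3p4 (T : finType) (e : rel T)
  (e_sym : symmetric e) (e_irr : irreflexive e)
  (hsize : 7 <= #|T|)
  (hfc : factor_critical e)
  (hes : edge_stable e)
  (hnK : ~ (complete e /\ odd #|T|)) :
  exists S : {set T}, independent e S /\ 2 <= #|S| /\
    (forall x y, x \in S -> y \notin S -> e x y).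
Proof.
have odd_T : odd #|T| by apply: (factor_critical_odd e_irr hfc); apply: leq_trans hsize.
apply: (exists_independent_joined e_sym e_irr hfc hes hsize).
by move=> hK; apply: hnK.
Qed.
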